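(* Let $S$ ($n\times n$, invertible), $U$ ($m\times n$), $V$ ($n\times m$) be complex matrices and $K$ an $n\times n$ matrix solving $S^{-1}K-KS=VU$. Then, with $\Xi=S^xe^{-t(S-S^{-1})}$ ($x\in\mathbb{Z}$, $t\in\mathbb{R}$), $$\mathcal{V}=-U\big(I+(\Xi K)^2\big)^{-1}\Xi V$$ (wherever the inverse exists) solves the $m\times m$ matrix semi-discrete modified KdV equation $\dot{\mathcal{V}}+\mathcal{V}^+(I+\mathcal{V}^2)-(I+\mathcal{V}^2)\mathcal{V}^-=0$.
   Context: $\mathcal{V}^\pm(x,t)=\mathcal{V}(x\pm1,t)$, $\dot{\mathcal{V}}=\partial_t\mathcal{V}$, $I=I_m$ in the equation and $I=I_n$ in the formula for $\mathcal{V}$. *)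

(* complex numbers as pairs of Stdlib reals, matrices as
   functions nat -> nat -> C with dimensions carried by the operations. *)
From Stdlib Require Import Reals ZArith.
Open Scope R_scope.

Definition C : Type := (R * R)%type.
Definition Re (z : C) : R := fst z.
Definition Im (z : C) : R := snd z.
Definition C0 : C := (0, 0).
Definition C1 : C := (1, 0).
Definition Cadd (z w : C) : C := (Re z + Re w, Im z + Im w).
Definition Copp (z : C) : C := (- Re z, - Im z).
Definition Cmul (z w : C) : C :=
  (Re z * Re w - Im z * Im w, Re z * Im w + Im z * Re w).
Definition RtoC (r : R) : C := (r, 0).

Fixpoint Csum (f : nat -> C) (p : nat) : C :=
  match p with O => C0 | S q => Cadd (Csum f q) (f q) end.

(* A matrix; only the entries with indices in range are meaningful. *)
Definition Mat : Type := nat -> nat -> C.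

Definition mI : Mat := fun i j => if Nat.eqb i j then C1 else C0.
Definition madd (A B : Mat) : Mat := fun i j => Cadd (A i j) (B i j).
Definition mopp (A : Mat) : Mat := fun i j => Copp (A i j).
Definition msub (A B : Mat) : Mat := madd A (mopp B).
Definition mscale (r : R) (A : Mat) : Mat := fun i j => Cmul (RtoC r) (A i j).
Definition mmul (p : nat) (A B : Mat) : Mat :=
  fun i j => Csum (fun k => Cmul (A i k) (B k j)) p.
Fixpoint mpow (n : nat) (A : Mat) (k : nat) : Mat :=
  match k with O => mI | S k' => mmul n (mpow n A k') A end.

Definition meq (r c : nat) (A B : Mat) : Prop :=
  forall i j, (i < r)%nat -> (j < c)%nat -> A i j = B i j.

Definition mpowZ (n : nat) (S Sinv : Mat) (x : Z) : Mat :=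
  if Z.leb 0 x then mpow n S (Z.to_nat x) else mpow n Sinv (Z.to_nat (- x)).

Definition is_mexp (n : nat) (A E : Mat) : Prop :=
  forall i j, (i < n)%nat -> (j < n)%nat ->
    Un_cv (fun N => Re (Csum (fun k => mscale (/ INR (fact k)) (mpow n A k) i j) N))
          (Re (E i j)) /\
    Un_cv (fun N => Im (Csum (fun k => mscale (/ INR (fact k)) (mpow n A k) i j) N))
          (Im (E i j)).

Definition mderiv_at (r c : nat) (F : R -> Mat) (t : R) (D : Mat) : Prop :=
  forall i j, (i < r)%nat -> (j < c)%nat ->
    derivable_pt_lim (fun s => Re (F s i j)) t (Re (D i j)) /\
    derivable_pt_lim (fun s => Im (F s i j)) t (Im (D i j)).

(* Write Xi = S^x exp(-t (S - S^-1)), T = Xi K and W = (I + T^2)^-1, so that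
   calV = - U W Xi V.  Xi commutes with S and S^-1, so the Sylvester equation
   S^-1 K - K S = V U gives S^-1 T - T S = Xi V U; the shift x -> x+1 multiplies
   Xi and T by S on the left, and d/dt acts on both as -(S - S^-1).  Consequently
   I + (S T)^2 = I + T^2 - S Xi V U T, a perturbation of rank at most m, which turns
   into resolvent identities linking W(x+1), W(x) and W(x-1).  Differentiating calV
   with dW = - W (dT T + T dT) W and substituting these identities, the semi-discrete
   mKdV expression cancels term by term: in every product calV calV the middle
   factor V U is again a Sylvester term.  The analytic input is the termwise
   derivative of the matrix exponential (uniform convergence of the exponential
   series on bounded time intervals) and the derivative of a matrix inverse. *)

From Stdlib Require Import Reals ZArith Lra Lia FunctionalExtensionality Setoid Morphisms.
Open Scope R_scope.

Lemma Cext (z w : C) : Re z = Re w -> Im z = Im w -> z = w.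
Proof. destruct z, w; unfold Re, Im; simpl; intros -> ->; reflexivity. Qed.

Ltac csimpl := unfold Cadd, Copp, Cmul, RtoC, C0, C1, Re, Im in *; simpl in *; unfold Re, Im in *; simpl in *.
Ltac cring := apply Cext; csimpl; ring.

Lemma Csum_ext f g p : (forall k, (k < p)%nat -> f k = g k) -> Csum f p = Csum g p.
Proof.
  induction p as [|p IH]; intros H; simpl; [reflexivity|].
  rewrite IH, H by (auto; lia). reflexivity.
Qed.

Lemma Csum_add f g p : Csum (fun k => Cadd (f k) (g k)) p = Cadd (Csum f p) (Csum g p).
Proof. induction p as [|p IH]; simpl; [|rewrite IH]; cring. Qed.

Lemma Csum_opp f p : Csum (fun k => Copp (f k)) p = Copp (Csum f p).
Proof. induction p as [|p IH]; simpl; [|rewrite IH]; cring. Qed.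

Lemma Csum_mul_l a f p : Csum (fun k => Cmul a (f k)) p = Cmul a (Csum f p).
Proof. induction p as [|p IH]; simpl; [|rewrite IH]; cring. Qed.

Lemma Csum_mul_r a f p : Csum (fun k => Cmul (f k) a) p = Cmul (Csum f p) a.
Proof. induction p as [|p IH]; simpl; [|rewrite IH]; cring. Qed.

Lemma Csum_zero p : Csum (fun _ => C0) p = C0.
Proof. induction p as [|p IH]; simpl; [|rewrite IH]; cring. Qed.

Lemma Csum_swap f p q :
  Csum (fun k => Csum (fun l => f k l) q) p = Csum (fun l => Csum (fun k => f k l) p) q.
Proof.
  induction p as [|p IH]; simpl; [symmetry; apply Csum_zero|].
  rewrite IH, <- Csum_add. reflexivity.
Qed.

Lemma Csum_shift f N : Csum f (S N) = Cadd (f 0%nat) (Csum (fun k => f (S k)) N).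
Proof. induction N as [|N IH]; simpl in *; [|rewrite IH]; cring. Qed.

Lemma Csum_delta (a : nat -> C) i p :
  (i < p)%nat -> Csum (fun k => if Nat.eqb i k then a k else C0) p = a i.
Proof.
  induction p as [|p IH]; intros Hi; [lia|]. simpl.
  destruct (Nat.eqb_spec i p) as [->|Hne].
  - rewrite (Csum_ext _ (fun _ => C0)), Csum_zero; [cring|].
    intros k Hk. destruct (Nat.eqb_spec p k); [lia|reflexivity].
  - rewrite IH by lia. cring.
Qed.

(** * Matrix algebra *)

Lemma mat_ext (A B : Mat) : (forall i j, A i j = B i j) -> A = B.
Proof. intros H. extensionality i. extensionality j. apply H. Qed.

Lemma mmul_assoc p q A B D : mmul p (mmul q A B) D = mmul q A (mmul p B D).
Proof.
  apply mat_ext; intros i j; unfold mmul.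
  rewrite (Csum_ext _ (fun k => Csum (fun l => Cmul (A i l) (Cmul (B l k) (D k j))) q)).
  - rewrite Csum_swap. apply Csum_ext. intros l _. apply Csum_mul_l.
  - intros k _. rewrite <- Csum_mul_r. apply Csum_ext. intros; cring.
Qed.

Lemma mmul_add_l p A B D : mmul p (madd A B) D = madd (mmul p A D) (mmul p B D).
Proof.
  apply mat_ext; intros i j; unfold mmul, madd.
  rewrite <- Csum_add. apply Csum_ext; intros; cring.
Qed.

Lemma mmul_add_r p A B D : mmul p D (madd A B) = madd (mmul p D A) (mmul p D B).
Proof.
  apply mat_ext; intros i j; unfold mmul, madd.
  rewrite <- Csum_add. apply Csum_ext; intros; cring.
Qed.

Lemma mmul_opp_l p A B : mmul p (mopp A) B = mopp (mmul p A B).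
Proof.
  apply mat_ext; intros i j; unfold mmul, mopp.
  rewrite <- Csum_opp. apply Csum_ext; intros; cring.
Qed.

Lemma mmul_opp_r p A B : mmul p A (mopp B) = mopp (mmul p A B).
Proof.
  apply mat_ext; intros i j; unfold mmul, mopp.
  rewrite <- Csum_opp. apply Csum_ext; intros; cring.
Qed.

Lemma mmul_sub_l p A B D : mmul p (msub A B) D = msub (mmul p A D) (mmul p B D).
Proof. unfold msub. rewrite mmul_add_l, mmul_opp_l. reflexivity. Qed.

Lemma mmul_sub_r p A B D : mmul p D (msub A B) = msub (mmul p D A) (mmul p D B).
Proof. unfold msub. rewrite mmul_add_r, mmul_opp_r. reflexivity. Qed.

Lemma mmul_scale_l p r A B : mmul p (mscale r A) B = mscale r (mmul p A B).
Proof.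
  apply mat_ext; intros i j; unfold mmul, mscale.
  rewrite <- Csum_mul_l. apply Csum_ext; intros; cring.
Qed.

Lemma mmul_scale_r p r A B : mmul p A (mscale r B) = mscale r (mmul p A B).
Proof.
  apply mat_ext; intros i j; unfold mmul, mscale.
  rewrite <- Csum_mul_l. apply Csum_ext; intros; cring.
Qed.

Lemma mscale_mscale a b A : mscale a (mscale b A) = mscale (a * b) A.
Proof. apply mat_ext; intros; unfold mscale; cring. Qed.

Lemma mscale_1 A : mscale 1 A = A.
Proof. apply mat_ext; intros; unfold mscale; cring. Qed.

Lemma mmul_I_l n A i j : (i < n)%nat -> mmul n mI A i j = A i j.
Proof.
  intros Hi; unfold mmul, mI.
  rewrite <- (Csum_delta (fun k => A k j) i n Hi).
  apply Csum_ext; intros k _. destruct (Nat.eqb i k); cring.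
Qed.

Lemma mmul_I_r n A i j : (j < n)%nat -> mmul n A mI i j = A i j.
Proof.
  intros Hj; unfold mmul, mI.
  rewrite <- (Csum_delta (fun k => A i k) j n Hj).
  apply Csum_ext; intros k _. rewrite Nat.eqb_sym. destruct (Nat.eqb j k); cring.
Qed.

#[export] Instance meq_equiv r c : Equivalence (meq r c).
Proof.
  split.
  - intros A i j _ _; reflexivity.
  - intros A B H i j Hi Hj; symmetry; auto.
  - intros A B D H1 H2 i j Hi Hj; rewrite H1, H2; auto.
Qed.

#[export] Instance mmul_proper r p c : Proper (meq r p ==> meq p c ==> meq r c) (mmul p).
Proof.
  intros A A' HA B B' HB i j Hi Hj; unfold mmul.
  apply Csum_ext; intros k Hk. rewrite HA, HB; auto.
Qed.

#[export] Instance madd_proper r c : Proper (meq r c ==> meq r c ==> meq r c) madd.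
Proof. intros A A' HA B B' HB i j Hi Hj; unfold madd; rewrite HA, HB; auto. Qed.

#[export] Instance mopp_proper r c : Proper (meq r c ==> meq r c) mopp.
Proof. intros A A' HA i j Hi Hj; unfold mopp; rewrite HA; auto. Qed.

#[export] Instance msub_proper r c : Proper (meq r c ==> meq r c ==> meq r c) msub.
Proof. intros A A' HA B B' HB; unfold msub; rewrite HA, HB; reflexivity. Qed.

#[export] Instance mscale_proper r c s : Proper (meq r c ==> meq r c) (mscale s).
Proof. intros A A' HA i j Hi Hj; unfold mscale; rewrite HA; auto. Qed.

Lemma mmul_I_l_meq r c A : meq r c (mmul r mI A) A.
Proof. intros i j Hi _; apply mmul_I_l; auto. Qed.

Lemma mmul_I_r_meq r c A : meq r c (mmul c A mI) A.
Proof. intros i j _ Hj; apply mmul_I_r; auto. Qed.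

Lemma mmul_inv_cancel n c A B Z :
  meq n n (mmul n A B) mI -> meq n c (mmul n A (mmul n B Z)) Z.
Proof. intros H. rewrite <- mmul_assoc, H. apply mmul_I_l_meq. Qed.

Ltac mexpand := unfold msub;
  repeat rewrite ?mmul_assoc, ?mmul_add_l, ?mmul_add_r, ?mmul_opp_l, ?mmul_opp_r.
Ltac mring := let i := fresh in let j := fresh in
  intros i j _ _; unfold madd, mopp, msub; cring.

Definition is_inverse n (M W : Mat) : Prop :=
  meq n n (mmul n W M) mI /\ meq n n (mmul n M W) mI.

Lemma one_plus_sq_comm n T :
  meq n n (mmul n (madd mI (mmul n T T)) T) (mmul n T (madd mI (mmul n T T))).
Proof.
  rewrite mmul_add_l, mmul_add_r, (mmul_I_l_meq n n T), (mmul_I_r_meq n n T).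
  mexpand. reflexivity.
Qed.

(** * Consequences of the Sylvester equation *)

Section ShiftedResolvent.
Variable n : nat.
Variables Sg Si T0 T1 X0 X1 B W0 W1 : Mat.
Local Notation "A ** B" := (mmul n A B) (at level 40, left associativity).
Local Notation "A == B" := (meq n n A B) (at level 70).
Hypothesis HS1 : Sg ** Si == mI.
Hypothesis HS2 : Si ** Sg == mI.
Hypothesis Hsyl : msub (Si ** T0) (T0 ** Sg) == X0 ** B.
Hypothesis HX1 : X1 == Sg ** X0.
Hypothesis HT1 : T1 == Sg ** T0.
Hypothesis HW0 : is_inverse n (madd mI (T0 ** T0)) W0.
Hypothesis HW1 : is_inverse n (madd mI (T1 ** T1)) W1.

Lemma sylvester_STS : Sg ** (T0 ** Sg) == msub T0 (Sg ** (X0 ** B)).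
Proof. rewrite <- Hsyl, mmul_sub_r, (mmul_inv_cancel n n Sg Si T0 HS1). mring. Qed.

(* The rank-[B] perturbation that relates the two resolvents. *)
Lemma one_plus_sq_shift :
  madd mI (T1 ** T1) == msub (madd mI (T0 ** T0)) (Sg ** (X0 ** (B ** T0))).
Proof.
  rewrite HT1, mmul_assoc, <- (mmul_assoc n n T0 Sg T0), <- (mmul_assoc n n Sg _ T0),
    sylvester_STS.
  mexpand. mring.
Qed.

Lemma resolvent_shift_l : W1 == madd W0 (W0 ** (Sg ** (X0 ** (B ** (T0 ** W1))))).
Proof.
  destruct HW0 as [H01 H02]; destruct HW1 as [H11 H12].
  transitivity (madd (W0 ** (madd mI (T1 ** T1) ** W1)) (W0 ** (Sg ** (X0 ** (B ** (T0 ** W1)))))).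
  - rewrite one_plus_sq_shift, mmul_sub_l, mmul_sub_r, (mmul_inv_cancel n n W0 _ W1 H01).
    mexpand. mring.
  - rewrite H12, (mmul_I_r_meq n n W0). reflexivity.
Qed.

Lemma resolvent_shift_r : W1 == madd W0 (W1 ** (Sg ** (X0 ** (B ** (T0 ** W0))))).
Proof.
  destruct HW0 as [H01 H02]; destruct HW1 as [H11 H12].
  assert (E : madd mI (T0 ** T0) == madd (madd mI (T1 ** T1)) (Sg ** (X0 ** (B ** T0))))
    by (rewrite one_plus_sq_shift; mring).
  transitivity (W1 ** (madd mI (T0 ** T0) ** W0)).
  - rewrite H02, (mmul_I_r_meq n n W1). reflexivity.
  - rewrite E, mmul_add_l, mmul_add_r, (mmul_inv_cancel n n W1 _ W0 H11). mexpand. reflexivity.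
Qed.

Lemma resolvent_cross :
  W1 ** (X1 ** (B ** (W0 ** X0))) == msub (T0 ** (W0 ** X0)) (Sg ** (T0 ** (W1 ** X1))).
Proof.
  destruct HW0 as [H01 H02]; destruct HW1 as [H11 H12].
  set (M1 := madd mI (T1 ** T1)).
  assert (K1 : M1 ** (T0 ** (W0 ** X0))
               == msub (T0 ** X0) (Sg ** (X0 ** (B ** (T0 ** (T0 ** (W0 ** X0))))))).
  { unfold M1. rewrite one_plus_sq_shift, mmul_sub_l, <- (mmul_assoc n n _ T0 _),
      one_plus_sq_comm, mmul_assoc, (mmul_inv_cancel n n _ W0 X0 H02).
    mexpand. reflexivity. }
  assert (K2 : M1 ** (Sg ** (T0 ** (W1 ** X1))) == msub (T0 ** X0) (Sg ** (X0 ** (B ** X0)))).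
  { unfold M1. rewrite <- (mmul_assoc n n Sg T0 _), <- HT1, <- (mmul_assoc n n _ T1 _),
      one_plus_sq_comm, mmul_assoc, (mmul_inv_cancel n n _ W1 X1 H12), HT1, HX1, mmul_assoc,
      <- (mmul_assoc n n T0 Sg X0), <- (mmul_assoc n n Sg _ X0), sylvester_STS.
    mexpand. mring. }
  assert (K3 : M1 ** (W1 ** (X1 ** (B ** (W0 ** X0)))) == Sg ** (X0 ** (B ** (W0 ** X0)))).
  { unfold M1. rewrite (mmul_inv_cancel n n _ W1 _ H12), HX1. mexpand. reflexivity. }
  assert (K4 : X0 == madd (W0 ** X0) (T0 ** (T0 ** (W0 ** X0)))).
  { transitivity (madd mI (T0 ** T0) ** (W0 ** X0)).
    - rewrite (mmul_inv_cancel n n _ W0 X0 H02). reflexivity.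
    - rewrite mmul_add_l, (mmul_I_l_meq n n). mexpand. reflexivity. }
  assert (K5 : Sg ** (X0 ** (B ** X0))
               == madd (Sg ** (X0 ** (B ** (W0 ** X0)))) (Sg ** (X0 ** (B ** (T0 ** (T0 ** (W0 ** X0))))))).
  { rewrite K4 at 2. mexpand. reflexivity. }
  transitivity (W1 ** (M1 ** (W1 ** (X1 ** (B ** (W0 ** X0)))))).
  { symmetry; apply mmul_inv_cancel; auto. }
  transitivity (W1 ** (M1 ** msub (T0 ** (W0 ** X0)) (Sg ** (T0 ** (W1 ** X1))))).
  2:{ apply mmul_inv_cancel; auto. }
  apply mmul_proper; [reflexivity|]. rewrite K3, mmul_sub_r, K1, K2, K5. mring.
Qed.

Lemma resolvent_cross_swap :
  W0 ** (Sg ** (X0 ** (B ** (Si ** (W1 ** X1))))) == W1 ** (X1 ** (B ** (W0 ** X0))).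
Proof.
  destruct HW0 as [H01 H02]; destruct HW1 as [H11 H12].
  assert (HW1X1 : W1 ** X1 == msub (Sg ** (madd mI (T0 ** T0) ** (W0 ** X0)))
                                   (Sg ** (T0 ** (Sg ** (T0 ** (W1 ** X1)))))).
  { rewrite (mmul_inv_cancel n n _ W0 X0 H02), <- HX1.
    transitivity (msub (madd mI (T1 ** T1) ** (W1 ** X1)) (Sg ** (T0 ** (Sg ** (T0 ** (W1 ** X1)))))).
    - rewrite mmul_add_l, (mmul_I_l_meq n n), HT1. mexpand. mring.
    - rewrite (mmul_inv_cancel n n _ W1 X1 H12). reflexivity. }
  assert (D : Si ** (W1 ** X1) == madd (W0 ** X0) (T0 ** (W1 ** (X1 ** (B ** (W0 ** X0)))))).
  { rewrite HW1X1 at 1.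
    rewrite mmul_sub_r, !(mmul_inv_cancel n n Si Sg _ HS2), mmul_add_l, (mmul_I_l_meq n n),
      resolvent_cross.
    mexpand. mring. }
  assert (E : madd mI (T0 ** T0) == madd (madd mI (T1 ** T1)) (Sg ** (X0 ** (B ** T0))))
    by (rewrite one_plus_sq_shift; mring).
  transitivity (W0 ** (madd mI (T0 ** T0) ** (W1 ** (X1 ** (B ** (W0 ** X0)))))).
  2:{ apply mmul_inv_cancel; auto. }
  rewrite D, E, mmul_add_l, (mmul_inv_cancel n n _ W1 _ H12), HX1. mexpand. mring.
Qed.

End ShiftedResolvent.

Section ResolventDerivative.
Variable n : nat.
Variables Sg Si B X Xp Xm T Tp Tm W Wp Wm Xd Td : Mat.
Local Notation "A ** B" := (mmul n A B) (at level 40, left associativity).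
Local Notation "A == B" := (meq n n A B) (at level 70).
Hypothesis HS1 : Sg ** Si == mI.
Hypothesis HS2 : Si ** Sg == mI.
Hypothesis Hsyl : msub (Si ** T) (T ** Sg) == X ** B.
Hypothesis Hsylm : msub (Si ** Tm) (Tm ** Sg) == Xm ** B.
Hypothesis HXp : Xp == Sg ** X.
Hypothesis HTp : Tp == Sg ** T.
Hypothesis HX : X == Sg ** Xm.
Hypothesis HT : T == Sg ** Tm.
Hypothesis HW : is_inverse n (madd mI (T ** T)) W.
Hypothesis HWp : is_inverse n (madd mI (Tp ** Tp)) Wp.
Hypothesis HWm : is_inverse n (madd mI (Tm ** Tm)) Wm.
Hypothesis HXd : Xd == mopp (msub (Sg ** X) (Si ** X)).
Hypothesis HTd : Td == mopp (msub (Sg ** T) (Si ** T)).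

Lemma sq_deriv_sylvester :
  madd (Td ** T) (T ** Td) == madd (X ** (B ** T)) (Sg ** (X ** (B ** (Si ** T)))).
Proof.
  assert (TS : forall Z, T ** (Sg ** Z) == msub (Si ** (T ** Z)) (X ** (B ** Z))).
  { intros Z. rewrite <- (mmul_assoc n n T Sg Z).
    assert (E : T ** Sg == msub (Si ** T) (X ** B)) by (rewrite <- Hsyl; mring).
    rewrite E. mexpand. reflexivity. }
  assert (TSi : forall Z, T ** (Si ** Z) == madd (Sg ** (T ** Z)) (Sg ** (X ** (B ** (Si ** Z))))).
  { intros Z.
    transitivity (Sg ** (Si ** (T ** (Si ** Z)))); [symmetry; apply mmul_inv_cancel; auto|].
    assert (E : Si ** T == madd (X ** B) (T ** Sg)) by (rewrite <- Hsyl; mring).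
    rewrite <- (mmul_assoc n n Si T _), E. mexpand.
    rewrite (mmul_inv_cancel n n Sg Si Z HS1). mring. }
  rewrite HTd. mexpand. rewrite TS, TSi. mexpand. mring.
Qed.

Lemma resolvent_deriv_identity :
  madd (mopp (W ** (madd (Td ** T) (T ** Td) ** (W ** X)))) (W ** Xd) ==
  msub (madd (Wm ** Xm) (W ** (X ** (B ** (W ** (X ** (B ** (Wm ** Xm))))))))
       (madd (Wp ** Xp) (Wp ** (Xp ** (B ** (W ** (X ** (B ** (W ** X)))))))).
Proof.
  pose proof (resolvent_shift_l n Sg Si T Tp X B W Wp HS1 Hsyl HTp HW HWp) as Gp.
  pose proof (resolvent_cross n Sg Si T Tp X Xp B W Wp HS1 Hsyl HXp HTp HW HWp) as Rp.
  pose proof (resolvent_cross_swap n Sg Si T Tp X Xp B W Wp HS1 HS2 Hsyl HXp HTp HW HWp) as Lp.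
  pose proof (resolvent_shift_r n Sg Si Tm T Xm B Wm W HS1 Hsylm HT HWm HW) as Gm.
  pose proof (resolvent_cross n Sg Si Tm T Xm X B Wm W HS1 Hsylm HX HT HWm HW) as Rm.
  assert (Lp' : forall Z, W ** (Sg ** (X ** (B ** (Si ** (Wp ** (Xp ** Z))))))
                          == Wp ** (Xp ** (B ** (W ** (X ** Z))))).
  { intros Z. pose proof (mmul_proper n n n _ _ Lp Z Z (reflexivity Z)) as H.
    rewrite !mmul_assoc in H. exact H. }
  assert (HXm : Xm == Si ** X) by (rewrite HX, (mmul_inv_cancel n n Si Sg Xm HS2); reflexivity).
  assert (EYm : Wm ** Xm == msub (W ** Xm) (W ** (X ** (B ** (madd (T ** (W ** X))
                                                  (W ** (X ** (B ** (Wm ** Xm))))))))).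
  { assert (EQm : Tm ** (Wm ** Xm) == madd (W ** (X ** (B ** (Wm ** Xm)))) (T ** (W ** X)))
      by (rewrite Rm, <- (mmul_assoc n n Sg Tm _), <- HT; mring).
    assert (EWm : Wm == msub W (W ** (Sg ** (Xm ** (B ** (Tm ** Wm))))))
      by (rewrite Gm at 1; mring).
    rewrite EWm at 1. rewrite mmul_sub_l. mexpand.
    rewrite EQm, <- (mmul_assoc n n Sg Xm _), <- HX. mexpand. mring. }
  assert (EYp : Wp ** Xp == msub (madd (W ** (Sg ** X)) (W ** (Sg ** (X ** (B ** (Si ** (T ** (W ** X))))))))
                                 (Wp ** (Xp ** (B ** (W ** (X ** (B ** (W ** X)))))))).
  { assert (ETp : T ** (Wp ** Xp) == msub (Si ** (T ** (W ** X))) (Si ** (Wp ** (Xp ** (B ** (W ** X)))))).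
    { assert (E : Sg ** (T ** (Wp ** Xp)) == msub (T ** (W ** X)) (Wp ** (Xp ** (B ** (W ** X)))))
        by (rewrite Rp; mring).
      rewrite <- mmul_sub_r, <- E. symmetry; apply mmul_inv_cancel; auto. }
    rewrite Gp at 1. rewrite mmul_add_l. mexpand. rewrite ETp. mexpand.
    rewrite Lp', HXp at 1. mexpand. mring. }
  rewrite EYm, EYp, sq_deriv_sylvester, HXd, HXm at 1. mexpand. mring.
Qed.

End ResolventDerivative.

Lemma sdmKdV_algebraic n m Sg Si K U V X Xp Xm W Wp Wm Xd :
  meq n n (mmul n Sg Si) mI -> meq n n (mmul n Si Sg) mI ->
  meq n n (msub (mmul n Si (mmul n X K)) (mmul n (mmul n X K) Sg)) (mmul n X (mmul m V U)) ->
  meq n n (msub (mmul n Si (mmul n Xm K)) (mmul n (mmul n Xm K) Sg)) (mmul n Xm (mmul m V U)) ->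
  meq n n Xp (mmul n Sg X) -> meq n n X (mmul n Sg Xm) ->
  is_inverse n (madd mI (mmul n (mmul n X K) (mmul n X K))) W ->
  is_inverse n (madd mI (mmul n (mmul n Xp K) (mmul n Xp K))) Wp ->
  is_inverse n (madd mI (mmul n (mmul n Xm K) (mmul n Xm K))) Wm ->
  meq n n Xd (mopp (msub (mmul n Sg X) (mmul n Si X))) ->
  let Vc := mopp (mmul n (mmul n (mmul n U W) X) V) in
  let Vp := mopp (mmul n (mmul n (mmul n U Wp) Xp) V) in
  let Vm := mopp (mmul n (mmul n (mmul n U Wm) Xm) V) in
  let IV2 := madd mI (mmul m Vc Vc) in
  let Td := mmul n Xd K in
  let T := mmul n X K in
  let Wd := mopp (mmul n W (mmul n (madd (mmul n Td T) (mmul n T Td)) W)) in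
  meq m m (mopp (mmul n (madd (mmul n (mmul n U Wd) X) (mmul n (mmul n U W) Xd)) V))
          (mopp (msub (mmul m Vp IV2) (mmul m IV2 Vm))).
Proof.
  intros HS1 HS2 Hsyl Hsylm HXp HX HW HWp HWm HXd Vc Vp Vm IV2 Td T Wd.
  assert (HTp : meq n n (mmul n Xp K) (mmul n Sg T)) by (unfold T; rewrite HXp; mexpand; reflexivity).
  assert (HT : meq n n T (mmul n Sg (mmul n Xm K))) by (unfold T; rewrite HX; mexpand; reflexivity).
  assert (HTd : meq n n Td (mopp (msub (mmul n Sg T) (mmul n Si T))))
    by (unfold Td, T; rewrite HXd; mexpand; reflexivity).
  pose proof (resolvent_deriv_identity n Sg Si (mmul m V U) X Xp Xm T (mmul n Xp K) (mmul n Xm K)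
     W Wp Wm Xd Td HS1 HS2 Hsyl Hsylm HXp HTp HX HT HW HWp HWm HXd HTd) as Hres.
  transitivity (mopp (mmul n (mmul n U (madd (mopp (mmul n W (mmul n (madd (mmul n Td T)
     (mmul n T Td)) (mmul n W X)))) (mmul n W Xd))) V)).
  { unfold Wd. mexpand. reflexivity. }
  rewrite Hres. unfold IV2, Vp, Vm, Vc.
  rewrite mmul_add_r, mmul_add_l, (mmul_I_r_meq m m), (mmul_I_l_meq m m).
  mexpand. mring.
Qed.

Lemma mpow_succ_l n A k : meq n n (mpow n A (S k)) (mmul n A (mpow n A k)).
Proof.
  induction k as [|k IH].
  - simpl. rewrite (mmul_I_l_meq n n A), (mmul_I_r_meq n n A). reflexivity.
  - change (mpow n A (S (S k))) with (mmul n (mpow n A (S k)) A).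
    rewrite IH at 1. rewrite mmul_assoc. reflexivity.
Qed.

Lemma mpow_scale n x A k : mpow n (mscale x A) k = mscale (x ^ k) (mpow n A k).
Proof.
  induction k as [|k IH]; simpl; [symmetry; apply mscale_1|].
  rewrite IH, mmul_scale_l, mmul_scale_r, mscale_mscale. f_equal. ring.
Qed.

Lemma mpow_comm n A B k : meq n n (mmul n A B) (mmul n B A) ->
  meq n n (mmul n (mpow n A k) B) (mmul n B (mpow n A k)).
Proof.
  intros H; induction k as [|k IH]; simpl.
  - rewrite (mmul_I_l_meq n n B), (mmul_I_r_meq n n B). reflexivity.
  - rewrite mmul_assoc, H, <- mmul_assoc, IH, mmul_assoc. reflexivity.
Qed.

Lemma comm_inverse n Sg Si B : meq n n (mmul n Sg Si) mI -> meq n n (mmul n Si Sg) mI ->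
  meq n n (mmul n Sg B) (mmul n B Sg) -> meq n n (mmul n Si B) (mmul n B Si).
Proof.
  intros HS1 HS2 H.
  transitivity (mmul n Si (mmul n B (mmul n Sg Si))).
  - rewrite HS1, (mmul_I_r_meq n n B). reflexivity.
  - rewrite <- (mmul_assoc n n B Sg Si), <- H, mmul_assoc, (mmul_inv_cancel n n Si Sg _ HS2).
    reflexivity.
Qed.

Lemma mpowZ_succ n Sg Si y : meq n n (mmul n Sg Si) mI ->
  meq n n (mpowZ n Sg Si (y + 1)) (mmul n Sg (mpowZ n Sg Si y)).
Proof.
  intros HS1. unfold mpowZ.
  destruct (Z.leb_spec 0 y), (Z.leb_spec 0 (y + 1)); try lia.
  - replace (Z.to_nat (y + 1)) with (S (Z.to_nat y)) by lia. apply mpow_succ_l.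
  - replace y with (-1)%Z by lia. simpl.
    rewrite (mmul_I_l_meq n n Si). symmetry; exact HS1.
  - replace (Z.to_nat (- y)) with (S (Z.to_nat (- (y + 1)))) by lia.
    rewrite mpow_succ_l, (mmul_inv_cancel n n Sg Si _ HS1). reflexivity.
Qed.

Lemma mpowZ_comm n Sg Si y B :
  meq n n (mmul n Sg B) (mmul n B Sg) -> meq n n (mmul n Si B) (mmul n B Si) ->
  meq n n (mmul n (mpowZ n Sg Si y) B) (mmul n B (mpowZ n Sg Si y)).
Proof. intros H1 H2; unfold mpowZ; destruct (Z.leb 0 y); apply mpow_comm; auto. Qed.

(** * The entrywise [l1] norm *)

Fixpoint Rsum (f : nat -> R) (p : nat) : R :=
  match p with O => 0 | S q => Rsum f q + f q end.

Lemma Rsum_ext f g p : (forall k, (k < p)%nat -> f k = g k) -> Rsum f p = Rsum g p.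
Proof. induction p as [|p IH]; simpl; intros H; auto. rewrite IH, H by (auto; lia). reflexivity. Qed.

Lemma Rsum_le f g p : (forall k, (k < p)%nat -> f k <= g k) -> Rsum f p <= Rsum g p.
Proof.
  induction p as [|p IH]; simpl; intros H; [lra|].
  assert (Rsum f p <= Rsum g p) by (apply IH; intros; apply H; lia).
  assert (f p <= g p) by (apply H; lia). lra.
Qed.

Lemma Rsum_0 p : Rsum (fun _ => 0) p = 0.
Proof. induction p as [|p IH]; simpl; [|rewrite IH]; ring. Qed.

Lemma Rsum_nonneg f p : (forall k, (k < p)%nat -> 0 <= f k) -> 0 <= Rsum f p.
Proof. intros H. rewrite <- (Rsum_0 p). apply Rsum_le; auto. Qed.

Lemma Rsum_add f g p : Rsum (fun k => f k + g k) p = Rsum f p + Rsum g p.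
Proof. induction p as [|p IH]; simpl; [|rewrite IH]; ring. Qed.

Lemma Rsum_mul_l a f p : Rsum (fun k => a * f k) p = a * Rsum f p.
Proof. induction p as [|p IH]; simpl; [|rewrite IH]; ring. Qed.

Lemma Rsum_swap f p q :
  Rsum (fun k => Rsum (fun l => f k l) q) p = Rsum (fun l => Rsum (fun k => f k l) p) q.
Proof.
  induction p as [|p IH]; simpl; [symmetry; apply Rsum_0|].
  rewrite IH, <- Rsum_add. reflexivity.
Qed.

Lemma Rsum_split f N d : Rsum f (N + d) = Rsum f N + Rsum (fun k => f (N + k)%nat) d.
Proof.
  induction d as [|d IH]; simpl; [rewrite Nat.add_0_r; ring|].
  rewrite Nat.add_succ_r; simpl. rewrite IH; ring.
Qed.

Lemma Rsum_term_le f p i :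
  (forall k, (k < p)%nat -> 0 <= f k) -> (i < p)%nat -> f i <= Rsum f p.
Proof.
  intros H Hi. replace p with (S i + (p - S i))%nat by lia.
  rewrite Rsum_split. change (Rsum f (S i)) with (Rsum f i + f i).
  assert (0 <= Rsum f i) by (apply Rsum_nonneg; intros; apply H; lia).
  assert (0 <= Rsum (fun k => f (S i + k)%nat) (p - S i))
    by (apply Rsum_nonneg; intros; apply H; lia).
  lra.
Qed.

Definition cnorm (z : C) : R := Rabs (Re z) + Rabs (Im z).
Definition mnorm (r c : nat) (A : Mat) : R := Rsum (fun i => Rsum (fun j => cnorm (A i j)) c) r.

Lemma cnorm_nonneg z : 0 <= cnorm z.
Proof. unfold cnorm. pose proof (Rabs_pos (Re z)); pose proof (Rabs_pos (Im z)); lra. Qed.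

Lemma cnorm_add z w : cnorm (Cadd z w) <= cnorm z + cnorm w.
Proof.
  unfold cnorm, Cadd, Re, Im; simpl.
  pose proof (Rabs_triang (fst z) (fst w)); pose proof (Rabs_triang (snd z) (snd w)); lra.
Qed.

Lemma cnorm_opp z : cnorm (Copp z) = cnorm z.
Proof. unfold cnorm, Copp, Re, Im; simpl. rewrite !Rabs_Ropp. reflexivity. Qed.

Lemma cnorm_mul z w : cnorm (Cmul z w) <= cnorm z * cnorm w.
Proof.
  destruct z as [a b], w as [c d]; unfold cnorm, Cmul, Re, Im; simpl.
  pose proof (Rabs_triang (a * c) (- (b * d))); pose proof (Rabs_triang (a * d) (b * c)).
  rewrite Rabs_Ropp, !Rabs_mult in *.
  pose proof (Rabs_pos a); pose proof (Rabs_pos b); pose proof (Rabs_pos c); pose proof (Rabs_pos d).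
  unfold Rminus. nra.
Qed.

Lemma cnorm_scale x z : cnorm (Cmul (RtoC x) z) = Rabs x * cnorm z.
Proof.
  unfold cnorm, Cmul, RtoC, Re, Im; simpl.
  replace (x * fst z - 0 * snd z) with (x * fst z) by ring.
  replace (x * snd z + 0 * fst z) with (x * snd z) by ring.
  rewrite !Rabs_mult. ring.
Qed.

Lemma cnorm_Csum f p : cnorm (Csum f p) <= Rsum (fun k => cnorm (f k)) p.
Proof.
  induction p as [|p IH]; simpl.
  - unfold cnorm, C0, Re, Im; simpl. rewrite Rabs_R0; lra.
  - pose proof (cnorm_add (Csum f p) (f p)). lra.
Qed.

Lemma cnorm_eq0 z : cnorm z = 0 -> z = C0.
Proof.
  destruct z as [a b]; unfold cnorm, C0, Re, Im; simpl; intros H.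
  pose proof (Rabs_pos a); pose proof (Rabs_pos b).
  assert (Ha : Rabs a = 0) by lra. assert (Hb : Rabs b = 0) by lra.
  destruct (Req_dec a 0), (Req_dec b 0); subst; auto;
    exfalso; eapply Rabs_no_R0; eauto.
Qed.

Lemma mnorm_nonneg r c A : 0 <= mnorm r c A.
Proof. apply Rsum_nonneg; intros; apply Rsum_nonneg; intros; apply cnorm_nonneg. Qed.

Lemma mnorm_entry_le r c A i j : (i < r)%nat -> (j < c)%nat -> cnorm (A i j) <= mnorm r c A.
Proof.
  intros Hi Hj. unfold mnorm.
  apply Rle_trans with (Rsum (fun j => cnorm (A i j)) c).
  - apply (Rsum_term_le (fun j => cnorm (A i j))); auto; intros; apply cnorm_nonneg.
  - apply (Rsum_term_le (fun i => Rsum (fun j => cnorm (A i j)) c)); auto.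
    intros; apply Rsum_nonneg; intros; apply cnorm_nonneg.
Qed.

Lemma mnorm_meq r c A B : meq r c A B -> mnorm r c A = mnorm r c B.
Proof. intros H; unfold mnorm. apply Rsum_ext; intros; apply Rsum_ext; intros. rewrite H; auto. Qed.

Lemma mnorm_add r c A B : mnorm r c (madd A B) <= mnorm r c A + mnorm r c B.
Proof.
  unfold mnorm. rewrite <- Rsum_add. apply Rsum_le; intros.
  rewrite <- Rsum_add. apply Rsum_le; intros. apply cnorm_add.
Qed.

Lemma mnorm_opp r c A : mnorm r c (mopp A) = mnorm r c A.
Proof. unfold mnorm, mopp. apply Rsum_ext; intros; apply Rsum_ext; intros. apply cnorm_opp. Qed.

Lemma mnorm_scale r c x A : mnorm r c (mscale x A) = Rabs x * mnorm r c A.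
Proof.
  unfold mnorm, mscale. rewrite <- Rsum_mul_l. apply Rsum_ext; intros.
  rewrite <- Rsum_mul_l. apply Rsum_ext; intros. apply cnorm_scale.
Qed.

Lemma mnorm_mul r p c A B : mnorm r c (mmul p A B) <= mnorm r p A * mnorm p c B.
Proof.
  unfold mnorm at 1, mmul.
  apply Rle_trans with
    (Rsum (fun i => Rsum (fun k => cnorm (A i k) * Rsum (fun j => cnorm (B k j)) c) p) r).
  - apply Rsum_le; intros i _.
    rewrite (Rsum_ext (fun k => _ * _) (fun k => Rsum (fun j => cnorm (A i k) * cnorm (B k j)) c))
      by (intros; symmetry; apply Rsum_mul_l).
    rewrite Rsum_swap. apply Rsum_le; intros j _.
    eapply Rle_trans; [apply cnorm_Csum|]. apply Rsum_le; intros; apply cnorm_mul.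
  - unfold mnorm. rewrite Rmult_comm, <- Rsum_mul_l. apply Rsum_le; intros i _.
    rewrite <- Rsum_mul_l. apply Rsum_le; intros k Hk. rewrite (Rmult_comm (mnorm p c B)).
    apply Rmult_le_compat_l; [apply cnorm_nonneg|].
    apply (Rsum_term_le (fun k => Rsum (fun j => cnorm (B k j)) c)); auto.
    intros; apply Rsum_nonneg; intros; apply cnorm_nonneg.
Qed.

Lemma Rsum_indicator i q :
  Rsum (fun j => if Nat.eqb i j then 1 else 0) q = if Nat.ltb i q then 1 else 0.
Proof.
  induction q as [|q IH]; simpl; [destruct i; reflexivity|].
  rewrite IH. destruct (Nat.ltb_spec i q), (Nat.eqb_spec i q), (Nat.ltb_spec i (S q)); try lia; lra.
Qed.

Lemma mnorm_I n : mnorm n n mI <= INR n.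
Proof.
  apply Rle_trans with (Rsum (fun _ => 1) n).
  - apply Rsum_le; intros i Hi.
    rewrite (Rsum_ext _ (fun j => if Nat.eqb i j then 1 else 0)).
    + rewrite Rsum_indicator. destruct (Nat.ltb i n); lra.
    + intros j _. unfold mI, cnorm.
      destruct (Nat.eqb i j); unfold Re, Im, C1, C0; simpl; rewrite ?Rabs_R1, ?Rabs_R0; ring.
  - right. clear. induction n as [|n IH]; [reflexivity|].
    rewrite S_INR. simpl. rewrite IH. reflexivity.
Qed.

Lemma mnorm_mpow n B k : mnorm n n (mpow n B k) <= INR n * mnorm n n B ^ k.
Proof.
  induction k as [|k IH]; simpl; [rewrite Rmult_1_r; apply mnorm_I|].
  eapply Rle_trans; [apply mnorm_mul|].
  pose proof (mnorm_nonneg n n B).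
  apply Rle_trans with ((INR n * mnorm n n B ^ k) * mnorm n n B); [|right; ring].
  apply Rmult_le_compat_r; auto.
Qed.

Lemma meq_of_mnorm_small r c A B :
  (forall e, 0 < e -> mnorm r c (msub A B) <= e) -> meq r c A B.
Proof.
  intros H i j Hi Hj.
  assert (H0 : cnorm (msub A B i j) = 0).
  { apply Rle_antisym; [|apply cnorm_nonneg]. apply Rnot_lt_le; intros Hlt.
    pose proof (H (cnorm (msub A B i j) / 2) ltac:(lra)).
    pose proof (mnorm_entry_le r c (msub A B) i j Hi Hj). lra. }
  apply cnorm_eq0 in H0. unfold msub, madd, mopp in H0.
  destruct (A i j) as [a1 b1], (B i j) as [c1 d1].
  unfold Cadd, Copp, C0, Re, Im in H0; simpl in H0.
  injection H0; intros; f_equal; lra.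
Qed.

(** * Derivatives *)

Lemma derivable_pt_lim_congr (f g : R -> R) x l l' :
  (forall s, f s = g s) -> l = l' -> derivable_pt_lim f x l -> derivable_pt_lim g x l'.
Proof. intros H <-. apply derivable_pt_lim_ext; auto. Qed.

Definition Cder (f : R -> C) (t : R) (d : C) : Prop :=
  derivable_pt_lim (fun s => Re (f s)) t (Re d) /\
  derivable_pt_lim (fun s => Im (f s)) t (Im d).

Lemma Cder_congr f g t d d' : (forall s, f s = g s) -> d = d' -> Cder f t d -> Cder g t d'.
Proof.
  intros H <- [H1 H2].
  split; eapply derivable_pt_lim_congr; eauto; intros; simpl; rewrite H; auto.
Qed.

Lemma Cder_const z t : Cder (fun _ => z) t C0.
Proof. split; apply derivable_pt_lim_const. Qed.

Lemma Cder_add f g t d1 d2 :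
  Cder f t d1 -> Cder g t d2 -> Cder (fun s => Cadd (f s) (g s)) t (Cadd d1 d2).
Proof. intros [H1 H2] [H3 H4]; split; apply derivable_pt_lim_plus; auto. Qed.

Lemma Cder_opp f t d : Cder f t d -> Cder (fun s => Copp (f s)) t (Copp d).
Proof. intros [H1 H2]; split; apply derivable_pt_lim_opp; auto. Qed.

Lemma Cder_mul f g t d1 d2 : Cder f t d1 -> Cder g t d2 ->
  Cder (fun s => Cmul (f s) (g s)) t (Cadd (Cmul d1 (g t)) (Cmul (f t) d2)).
Proof.
  intros [H1 H2] [H3 H4]; split.
  - eapply derivable_pt_lim_congr; [| |apply derivable_pt_lim_minus;
      apply derivable_pt_lim_mult; [exact H1|exact H3|exact H2|exact H4]].
    + intros; unfold minus_fct, mult_fct; reflexivity.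
    + csimpl; ring.
  - eapply derivable_pt_lim_congr; [| |apply derivable_pt_lim_plus;
      apply derivable_pt_lim_mult; [exact H1|exact H4|exact H2|exact H3]].
    + intros; unfold plus_fct, mult_fct; reflexivity.
    + csimpl; ring.
Qed.

Lemma Cder_Csum (f : nat -> R -> C) (d : nat -> C) t p :
  (forall k, (k < p)%nat -> Cder (f k) t (d k)) ->
  Cder (fun s => Csum (fun k => f k s) p) t (Csum d p).
Proof.
  induction p as [|p IH]; intros H; simpl; [apply Cder_const|].
  apply Cder_add; [apply IH; intros; apply H; lia|apply H; lia].
Qed.

Lemma Cder_scale (p : R -> R) p' z t : derivable_pt_lim p t p' ->
  Cder (fun s => Cmul (RtoC (p s)) z) t (Cmul (RtoC p') z).
Proof.
  intros H; split.
  - eapply derivable_pt_lim_congr;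
      [| |apply derivable_pt_lim_mult; [exact H|apply (derivable_pt_lim_const (Re z))]];
      intros; unfold mult_fct, fct_cte; csimpl; ring.
  - eapply derivable_pt_lim_congr;
      [| |apply derivable_pt_lim_mult; [exact H|apply (derivable_pt_lim_const (Im z))]];
      intros; unfold mult_fct, fct_cte; csimpl; ring.
Qed.

(* A complex version of [CVU_derivable]. *)
Lemma Cder_uniform_limit (f f' : nat -> R -> C) (g g' : R -> C) c (d : posreal) :
  (forall e, 0 < e -> exists N, forall k y, (N <= k)%nat -> Boule c d y ->
     cnorm (Cadd (g' y) (Copp (f' k y))) < e) ->
  (forall y, Boule c d y ->
     Un_cv (fun k => Re (f k y)) (Re (g y)) /\ Un_cv (fun k => Im (f k y)) (Im (g y))) ->
  (forall k y, Boule c d y -> Cder (f k) y (f' k y)) ->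
  Cder g c (g' c).
Proof.
  intros Hunif Hcv Hder.
  assert (Hc : Boule c d c) by (unfold Boule; rewrite Rminus_diag, Rabs_R0; apply cond_pos).
  split.
  - apply (CVU_derivable (fun k s => Re (f k s)) (fun k s => Re (f' k s))
            (fun s => Re (g s)) (fun s => Re (g' s)) c d); auto.
    + intros e He. destruct (Hunif e He) as [N HN]. exists N. intros k y Hk Hy.
      eapply Rle_lt_trans; [|exact (HN k y Hk Hy)].
      unfold cnorm; csimpl. unfold Rminus. pose proof (Rabs_pos (snd (g' y) + - snd (f' k y))). lra.
    + intros y Hy; apply Hcv; auto.
    + intros k y Hy; apply Hder; auto.
  - apply (CVU_derivable (fun k s => Im (f k s)) (fun k s => Im (f' k s))
            (fun s => Im (g s)) (fun s => Im (g' s)) c d); auto.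
    + intros e He. destruct (Hunif e He) as [N HN]. exists N. intros k y Hk Hy.
      eapply Rle_lt_trans; [|exact (HN k y Hk Hy)].
      unfold cnorm; csimpl; unfold Rminus. pose proof (Rabs_pos (fst (g' y) + - fst (f' k y))). lra.
    + intros y Hy; apply Hcv; auto.
    + intros k y Hy; apply Hder; auto.
Qed.

Lemma mderiv_congr r c F G t D D' : (forall s, meq r c (F s) (G s)) -> meq r c D D' ->
  mderiv_at r c F t D -> mderiv_at r c G t D'.
Proof.
  intros HF HD H i j Hi Hj.
  change (Cder (fun s => G s i j) t (D' i j)).
  eapply Cder_congr; [intros s; apply HF; auto|apply HD; auto|apply H; auto].
Qed.

Lemma mderiv_add_const_l r c A G t D : mderiv_at r c G t D ->
  mderiv_at r c (fun s => madd A (G s)) t D.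
Proof.
  intros H i j Hi Hj. eapply Cder_congr; [intros; reflexivity| |].
  2:{ apply (Cder_add (fun _ => A i j) (fun s => G s i j)); [apply Cder_const|apply H; auto]. }
  cring.
Qed.

Lemma mderiv_opp r c F t D : mderiv_at r c F t D -> mderiv_at r c (fun s => mopp (F s)) t (mopp D).
Proof. intros H i j Hi Hj. apply (Cder_opp (fun s => F s i j)); apply H; auto. Qed.

Lemma mderiv_mul r p c F G t D1 D2 : mderiv_at r p F t D1 -> mderiv_at p c G t D2 ->
  mderiv_at r c (fun s => mmul p (F s) (G s)) t (madd (mmul p D1 (G t)) (mmul p (F t) D2)).
Proof.
  intros H1 H2 i j Hi Hj. unfold mmul, madd.
  eapply Cder_congr; [intros; reflexivity|rewrite <- Csum_add; reflexivity|].
  apply (Cder_Csum (fun k s => Cmul (F s i k) (G s k j))). intros k Hk.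
  apply (Cder_mul (fun s => F s i k) (fun s => G s k j)); [apply H1|apply H2]; auto.
Qed.

Lemma mderiv_mul_const_l r p c A F t D : mderiv_at p c F t D ->
  mderiv_at r c (fun s => mmul p A (F s)) t (mmul p A D).
Proof.
  intros H i j Hi Hj. unfold mmul.
  apply (Cder_Csum (fun k s => Cmul (A i k) (F s k j))). intros k Hk.
  eapply Cder_congr; [intros; reflexivity| |].
  2:{ apply (Cder_mul (fun _ => A i k) (fun s => F s k j)); [apply Cder_const|apply H; auto]. }
  cring.
Qed.

Lemma mderiv_mul_const_r r p c A F t D : mderiv_at r p F t D ->
  mderiv_at r c (fun s => mmul p (F s) A) t (mmul p D A).
Proof.
  intros H i j Hi Hj. unfold mmul.
  apply (Cder_Csum (fun k s => Cmul (F s i k) (A k j))). intros k Hk.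
  eapply Cder_congr; [intros; reflexivity| |].
  2:{ apply (Cder_mul (fun s => F s i k) (fun _ => A k j)); [apply H; auto|apply Cder_const]. }
  cring.
Qed.

(** * Derivative of the inverse *)

(* Only an upper bound is required: for the nonnegative functions to which it is
   applied this says [phi h --> 0] as [h --> 0], [h <> 0]. *)
Definition vanishes_at_0 (phi : R -> R) : Prop :=
  forall e, 0 < e -> exists d, 0 < d /\ forall h, h <> 0 -> Rabs h < d -> phi h < e.

Lemma vanishes_add f g : vanishes_at_0 f -> vanishes_at_0 g -> vanishes_at_0 (fun h => f h + g h).
Proof.
  intros Hf Hg e He.
  destruct (Hf (e / 2) ltac:(lra)) as [d1 [Hd1 H1]], (Hg (e / 2) ltac:(lra)) as [d2 [Hd2 H2]].
  exists (Rmin d1 d2). split; [apply Rmin_pos; auto|]. intros h Hh Hhd.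
  pose proof (Rmin_l d1 d2); pose proof (Rmin_r d1 d2).
  specialize (H1 h Hh ltac:(lra)); specialize (H2 h Hh ltac:(lra)). lra.
Qed.

Lemma vanishes_Rsum (u : nat -> R -> R) p :
  (forall k, (k < p)%nat -> vanishes_at_0 (u k)) -> vanishes_at_0 (fun h => Rsum (fun k => u k h) p).
Proof.
  induction p as [|p IH]; intros H; simpl.
  - intros e He; exists 1; split; [lra|]; intros; auto.
  - apply (vanishes_add (fun h => Rsum (fun k => u k h) p) (u p)); [apply IH; intros|]; apply H; lia.
Qed.

Lemma vanishes_scale c f : 0 <= c -> vanishes_at_0 f -> vanishes_at_0 (fun h => c * f h).
Proof.
  intros Hc Hf e He. destruct (Hf (e / (c + 1)) ltac:(apply Rdiv_lt_0_compat; lra)) as [d [Hd H]].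
  exists d; split; auto. intros h Hh Hhd. specialize (H h Hh Hhd).
  apply Rle_lt_trans with (c * (e / (c + 1))).
  - destruct (Rle_lt_dec (f h) 0); [|apply Rmult_le_compat_l; lra].
    assert (0 <= c * (e / (c + 1))) by (apply Rmult_le_pos; [lra|left; apply Rdiv_lt_0_compat; lra]).
    nra.
  - apply Rlt_le_trans with ((c + 1) * (e / (c + 1))); [apply Rmult_lt_compat_r; [apply Rdiv_lt_0_compat|]; lra|].
    right; field; lra.
Qed.

Lemma vanishes_abs : vanishes_at_0 Rabs.
Proof. intros e He. exists e. split; auto. Qed.

Lemma vanishes_le f g :
  (exists d, 0 < d /\ forall h, h <> 0 -> Rabs h < d -> f h <= g h) ->
  vanishes_at_0 g -> vanishes_at_0 f.
Proof.
  intros [d0 [Hd0 Hle]] Hg e He. destruct (Hg e He) as [d [Hd H]].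
  exists (Rmin d0 d). split; [apply Rmin_pos; auto|]. intros h Hh Hhd.
  pose proof (Rmin_l d0 d); pose proof (Rmin_r d0 d).
  specialize (Hle h Hh ltac:(lra)). specialize (H h Hh ltac:(lra)). lra.
Qed.

Definition dquot_err (r c : nat) (F : R -> Mat) (t : R) (D : Mat) (h : R) : R :=
  mnorm r c (msub (mscale (/ h) (msub (F (t + h)) (F t))) D).

Lemma dquot_err_entry F t D h i j :
  msub (mscale (/ h) (msub (F (t + h)) (F t))) D i j =
  ((Re (F (t + h) i j) - Re (F t i j)) / h - Re (D i j),
   (Im (F (t + h) i j) - Im (F t i j)) / h - Im (D i j)).
Proof. unfold msub, madd, mopp, mscale. apply Cext; csimpl; unfold Rdiv; ring. Qed.

Lemma mderiv_dquot_err r c F t D : mderiv_at r c F t D -> vanishes_at_0 (dquot_err r c F t D).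
Proof.
  intros H. unfold dquot_err, mnorm.
  apply (vanishes_Rsum (fun i h => Rsum (fun j => cnorm (msub (mscale (/ h) (msub (F (t + h)) (F t))) D i j)) c)).
  intros i Hi.
  apply (vanishes_Rsum (fun j h => cnorm (msub (mscale (/ h) (msub (F (t + h)) (F t))) D i j))).
  intros j Hj. destruct (H i j Hi Hj) as [H1 H2].
  apply vanishes_le with (fun h => Rabs ((Re (F (t + h) i j) - Re (F t i j)) / h - Re (D i j))
                                   + Rabs ((Im (F (t + h) i j) - Im (F t i j)) / h - Im (D i j))).
  { exists 1. split; [lra|]. intros h _ _. rewrite dquot_err_entry. unfold cnorm, Re, Im; simpl; lra. }
  apply vanishes_add; intros e He;
    [destruct (H1 e He) as [d Hd]|destruct (H2 e He) as [d Hd]];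
    exists d; split; [apply cond_pos| |apply cond_pos|]; intros h Hh Hhd; apply Hd; auto.
Qed.

Lemma dquot_err_mderiv r c F t D : vanishes_at_0 (dquot_err r c F t D) -> mderiv_at r c F t D.
Proof.
  intros H i j Hi Hj.
  assert (Hent : forall h, cnorm (msub (mscale (/ h) (msub (F (t + h)) (F t))) D i j) <= dquot_err r c F t D h)
    by (intros; apply mnorm_entry_le; auto).
  split; intros e He; destruct (H e He) as [d [Hd Hh]]; exists (mkposreal d Hd);
    intros h Hh0 Hhd; simpl in Hhd; specialize (Hh h Hh0 Hhd); specialize (Hent h);
    rewrite dquot_err_entry in Hent; unfold cnorm, Re at 1, Im at 1 in Hent; simpl in Hent.
  - pose proof (Rabs_pos ((Im (F (t + h) i j) - Im (F t i j)) / h - Im (D i j))). lra.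
  - pose proof (Rabs_pos ((Re (F (t + h) i j) - Re (F t i j)) / h - Re (D i j))). lra.
Qed.

Lemma inverse_sub n M0 M1 W0 W1 : is_inverse n M0 W0 -> is_inverse n M1 W1 ->
  meq n n (msub W1 W0) (mopp (mmul n W1 (mmul n (msub M1 M0) W0))).
Proof.
  intros [H01 H02] [H11 H12].
  transitivity (msub (mmul n W1 (mmul n M0 W0)) (mmul n (mmul n W1 M1) W0)).
  - rewrite H02, H11, (mmul_I_r_meq n n W1), (mmul_I_l_meq n n W0). reflexivity.
  - mexpand. mring.
Qed.

Lemma inverse_mnorm_le n M0 M1 W0 W1 : is_inverse n M0 W0 -> is_inverse n M1 W1 ->
  mnorm n n (msub M1 M0) * mnorm n n W0 <= / 2 -> mnorm n n W1 <= 2 * mnorm n n W0.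
Proof.
  intros H0 H1 Hsmall.
  assert (Hdiff : mnorm n n (msub W1 W0) <= mnorm n n W1 * (mnorm n n (msub M1 M0) * mnorm n n W0)).
  { rewrite (mnorm_meq _ _ _ _ (inverse_sub n M0 M1 W0 W1 H0 H1)), mnorm_opp.
    eapply Rle_trans; [apply mnorm_mul|].
    apply Rmult_le_compat_l; [apply mnorm_nonneg|apply mnorm_mul]. }
  assert (mnorm n n W1 <= mnorm n n W0 + mnorm n n (msub W1 W0)).
  { rewrite (mnorm_meq n n W1 (madd W0 (msub W1 W0))) by mring. apply mnorm_add. }
  pose proof (mnorm_nonneg n n W1). nra.
Qed.

Lemma inverse_dquot_err_le n M0 M1 W0 W1 Md h :
  h <> 0 -> is_inverse n M0 W0 -> is_inverse n M1 W1 -> mnorm n n W1 <= 2 * mnorm n n W0 ->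
  mnorm n n (msub (mscale (/ h) (msub W1 W0)) (mopp (mmul n W0 (mmul n Md W0))))
  <= 2 * mnorm n n W0 * mnorm n n W0 * mnorm n n (msub (mscale (/ h) (msub M1 M0)) Md)
     + 2 * mnorm n n W0 * mnorm n n W0 * mnorm n n Md * mnorm n n W0 * mnorm n n (msub M1 M0).
Proof.
  intros Hh H0 H1 HW1. set (w := mnorm n n W0) in *.
  assert (Hw : 0 <= w) by apply mnorm_nonneg.
  set (sD := mscale (/ h) (msub M1 M0)).
  assert (Herr : meq n n (msub (mscale (/ h) (msub W1 W0)) (mopp (mmul n W0 (mmul n Md W0))))
                   (mopp (madd (mmul n W1 (mmul n (msub sD Md) W0))
                               (mmul n (msub W1 W0) (mmul n Md W0))))).
  { rewrite (inverse_sub n M0 M1 W0 W1 H0 H1) at 1.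
    replace (mscale (/ h) (mopp (mmul n W1 (mmul n (msub M1 M0) W0))))
      with (mopp (mmul n W1 (mmul n sD W0)))
      by (unfold sD; rewrite mmul_scale_l, mmul_scale_r; apply mat_ext; intros; unfold mscale, mopp; cring).
    mexpand. mring. }
  assert (HdW : mnorm n n (msub W1 W0) <= 2 * w * mnorm n n (msub M1 M0) * w).
  { rewrite (mnorm_meq _ _ _ _ (inverse_sub n M0 M1 W0 W1 H0 H1)), mnorm_opp.
    eapply Rle_trans; [apply mnorm_mul|].
    eapply Rle_trans; [apply Rmult_le_compat_l; [apply mnorm_nonneg|apply mnorm_mul]|].
    pose proof (mnorm_nonneg n n (msub M1 M0)).
    replace (2 * w * mnorm n n (msub M1 M0) * w) with ((2 * w) * (mnorm n n (msub M1 M0) * w)) by ring.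
    apply Rmult_le_compat_r; [nra|auto]. }
  pose proof (mnorm_nonneg n n Md).
  pose proof (mnorm_nonneg n n (msub sD Md)). pose proof (mnorm_nonneg n n (msub W1 W0)).
  rewrite (mnorm_meq _ _ _ _ Herr), mnorm_opp.
  eapply Rle_trans; [apply mnorm_add|]. apply Rplus_le_compat.
  - eapply Rle_trans; [apply mnorm_mul|].
    eapply Rle_trans; [apply Rmult_le_compat_l; [apply mnorm_nonneg|apply mnorm_mul]|].
    replace (2 * w * w * mnorm n n (msub sD Md)) with (2 * w * (mnorm n n (msub sD Md) * w)) by ring.
    apply Rmult_le_compat_r; [nra|auto].
  - eapply Rle_trans; [apply mnorm_mul|].
    eapply Rle_trans; [apply Rmult_le_compat_l; [apply mnorm_nonneg|apply mnorm_mul]|].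
    replace (2 * w * w * mnorm n n Md * w * mnorm n n (msub M1 M0))
      with ((2 * w * mnorm n n (msub M1 M0) * w) * (mnorm n n Md * w)) by ring.
    apply Rmult_le_compat_r; [nra|auto].
Qed.

Lemma mderiv_inverse n (M W : R -> Mat) t0 eps Md :
  0 < eps -> (forall s, Rabs (s - t0) < eps -> is_inverse n (M s) (W s)) ->
  mderiv_at n n M t0 Md -> mderiv_at n n W t0 (mopp (mmul n (W t0) (mmul n Md (W t0)))).
Proof.
  intros Heps HW HM. apply dquot_err_mderiv.
  pose proof (mderiv_dquot_err _ _ _ _ _ HM) as Hq.
  set (w := mnorm n n (W t0)). set (md := mnorm n n Md).
  set (dM := fun h => mnorm n n (msub (M (t0 + h)) (M t0))).
  assert (Hw : 0 <= w) by apply mnorm_nonneg. assert (Hmd : 0 <= md) by apply mnorm_nonneg.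
  assert (HdM : vanishes_at_0 dM).
  { apply vanishes_le with (fun h => (md + 1) * Rabs h).
    - destruct (Hq 1 ltac:(lra)) as [d [Hd H]]. exists d. split; auto. intros h Hh Hhd.
      specialize (H h Hh Hhd). unfold dquot_err in H.
      set (sD := mscale (/ h) (msub (M (t0 + h)) (M t0))) in H.
      assert (HsD : mnorm n n sD <= md + 1).
      { rewrite (mnorm_meq n n sD (madd (msub sD Md) Md)) by mring.
        eapply Rle_trans; [apply mnorm_add|]. fold md. lra. }
      unfold dM. replace (msub (M (t0 + h)) (M t0)) with (mscale h sD)
        by (unfold sD; rewrite mscale_mscale, Rinv_r, mscale_1; auto).
      rewrite mnorm_scale. pose proof (Rabs_pos h). nra.
    - apply vanishes_scale; [lra|apply vanishes_abs]. }
  destruct (HdM (/ (2 * (w + 1))) ltac:(apply Rinv_0_lt_compat; lra)) as [d1 [Hd1 Hsmall]].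
  apply vanishes_le with (fun h => 2 * w * w * dquot_err n n M t0 Md h + 2 * w * w * md * w * dM h).
  2:{ apply vanishes_add; apply vanishes_scale; auto; repeat apply Rmult_le_pos; lra. }
  exists (Rmin eps d1). split; [apply Rmin_pos; auto|]. intros h Hh Hhd.
  pose proof (Rmin_l eps d1); pose proof (Rmin_r eps d1).
  pose proof (HW (t0 + h) ltac:(replace (t0 + h - t0) with h by ring; lra)) as Hh1.
  pose proof (HW t0 ltac:(rewrite Rminus_diag, Rabs_R0; lra)) as Hh0.
  apply (inverse_dquot_err_le n (M t0) (M (t0 + h))); auto.
  apply (inverse_mnorm_le n (M t0) (M (t0 + h))); auto.
  specialize (Hsmall h Hh ltac:(lra)).
  change (mnorm n n (msub (M (t0 + h)) (M t0))) with (dM h). fold w.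
  apply Rle_trans with (/ (2 * (w + 1)) * (w + 1)); [|right; field; lra].
  assert (0 <= dM h) by apply mnorm_nonneg. apply Rmult_le_compat; lra.
Qed.

(** * The matrix exponential *)

Definition msum (F : nat -> Mat) (N : nat) : Mat := fun i j => Csum (fun k => F k i j) N.

Lemma mmul_msum_l p A F N : mmul p A (msum F N) = msum (fun k => mmul p A (F k)) N.
Proof.
  apply mat_ext; intros i j; unfold mmul, msum.
  rewrite (Csum_ext _ (fun l => Csum (fun k => Cmul (A i l) (F k l j)) N))
    by (intros; symmetry; apply Csum_mul_l).
  apply Csum_swap.
Qed.

Lemma mmul_msum_r p A F N : mmul p (msum F N) A = msum (fun k => mmul p (F k) A) N.
Proof.
  apply mat_ext; intros i j; unfold mmul, msum.
  rewrite (Csum_ext _ (fun l => Csum (fun k => Cmul (F k i l) (A l j)) N))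
    by (intros; symmetry; apply Csum_mul_r).
  apply Csum_swap.
Qed.

Lemma msum_meq r c F G N : (forall k, meq r c (F k) (G k)) -> meq r c (msum F N) (msum G N).
Proof. intros H i j Hi Hj; unfold msum; apply Csum_ext; intros; apply H; auto. Qed.

Lemma mnorm_zero r c : mnorm r c (fun _ _ => C0) = 0.
Proof.
  unfold mnorm. rewrite (Rsum_ext _ (fun _ => 0)); [apply Rsum_0|].
  intros; rewrite (Rsum_ext _ (fun _ => 0)); [apply Rsum_0|].
  intros; unfold cnorm, C0, Re, Im; simpl; rewrite Rabs_R0; ring.
Qed.

Lemma mnorm_msum_tail r c F N d :
  mnorm r c (msub (msum F (N + d)) (msum F N)) <= Rsum (fun k => mnorm r c (F (N + k)%nat)) d.
Proof.
  induction d as [|d IH]; simpl.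
  - rewrite Nat.add_0_r, (mnorm_meq r c _ (fun _ _ => C0)), mnorm_zero by mring. lra.
  - rewrite Nat.add_succ_r.
    change (msum F (S (N + d))) with (madd (msum F (N + d)) (F (N + d)%nat)).
    rewrite (mnorm_meq r c _ (madd (msub (msum F (N + d)) (msum F N)) (F (N + d)%nat))) by mring.
    eapply Rle_trans; [apply mnorm_add|lra].
Qed.

Lemma Un_cv_Rsum (u : nat -> nat -> R) p :
  (forall k, (k < p)%nat -> Un_cv (fun N => u N k) 0) -> Un_cv (fun N => Rsum (u N) p) 0.
Proof.
  induction p as [|p IH]; intros H; simpl.
  - intros e He; exists O; intros; unfold Rdist; rewrite Rminus_0_r, Rabs_R0; auto.
  - replace 0 with (0 + 0) by ring. apply CV_plus; [apply IH; intros|]; apply H; lia.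
Qed.

Lemma Un_cv_abs_diff (u : nat -> R) l : Un_cv u l -> Un_cv (fun N => Rabs (l - u N)) 0.
Proof.
  intros H e He. destruct (H e He) as [N HN]. exists N; intros k Hk.
  specialize (HN k Hk). unfold Rdist in *.
  rewrite Rminus_0_r, Rabs_Rabsolu, <- Rabs_Ropp, Ropp_minus_distr. auto.
Qed.

Lemma mnorm_cv r c (F : nat -> Mat) L :
  (forall i j, (i < r)%nat -> (j < c)%nat ->
     Un_cv (fun N => Re (F N i j)) (Re (L i j)) /\ Un_cv (fun N => Im (F N i j)) (Im (L i j))) ->
  Un_cv (fun N => mnorm r c (msub L (F N))) 0.
Proof.
  intros H. unfold mnorm.
  apply (Un_cv_Rsum (fun N i => Rsum (fun j => cnorm (msub L (F N) i j)) c)). intros i Hi.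
  apply (Un_cv_Rsum (fun N j => cnorm (msub L (F N) i j))). intros j Hj.
  destruct (H i j Hi Hj) as [H1 H2]. unfold cnorm, msub, madd, mopp; csimpl.
  replace 0 with (0 + 0) by ring.
  apply CV_plus; [apply (Un_cv_abs_diff (fun N => fst (F N i j)))|
                  apply (Un_cv_abs_diff (fun N => snd (F N i j)))]; auto.
Qed.

Definition exp_partial_R (rho : R) (N : nat) : R := Rsum (fun k => rho ^ k / INR (fact k)) N.

Lemma Rsum_sum_f_R0 f N : Rsum f (S N) = sum_f_R0 f N.
Proof. induction N as [|N IH]; simpl in *; [ring|rewrite <- IH; ring]. Qed.

Lemma exp_partial_R_cv rho : Un_cv (exp_partial_R rho) (exp rho).
Proof.
  apply (CV_shift _ 1). eapply Un_cv_ext; [|apply E1_cvg].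
  intros N. unfold E1, exp_partial_R. rewrite Nat.add_1_r, Rsum_sum_f_R0.
  apply sum_eq; intros. unfold Rdiv; ring.
Qed.

Lemma exp_partial_R_le rho N : 0 <= rho -> exp_partial_R rho N <= exp rho.
Proof.
  intros H. apply growing_ineq; [|apply exp_partial_R_cv].
  intros k. unfold exp_partial_R; simpl.
  assert (0 <= rho ^ k / INR (fact k))
    by (unfold Rdiv; apply Rmult_le_pos; [apply pow_le; auto|left; apply Rinv_0_lt_compat, INR_fact_lt_0]).
  lra.
Qed.

Section MatrixExp.
Variable n : nat.
Variable A : Mat.
Variable E : R -> Mat.
Hypothesis HE : forall t, is_mexp n (mscale (- t) A) (E t).

Definition exp_term (k : nat) (y : R) : Mat :=
  mscale (/ INR (fact k)) (mpow n (mscale (- y) A) k).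
Definition exp_partial (N : nat) (y : R) : Mat := msum (fun k => exp_term k y) N.

Lemma exp_partial_cv y : Un_cv (fun N => mnorm n n (msub (E y) (exp_partial N y))) 0.
Proof. apply mnorm_cv. intros i j Hi Hj. apply (HE y i j Hi Hj). Qed.

Lemma exp_term_bound k y r : Rabs y <= r ->
  mnorm n n (exp_term k y) <= INR n * ((r * mnorm n n A) ^ k / INR (fact k)).
Proof.
  intros Hy. unfold exp_term.
  assert (Hk : 0 < / INR (fact k)) by (apply Rinv_0_lt_compat, INR_fact_lt_0).
  pose proof (mnorm_nonneg n n A). pose proof (pos_INR n).
  rewrite mnorm_scale, Rabs_right by lra.
  apply Rle_trans with (/ INR (fact k) * (INR n * (r * mnorm n n A) ^ k)); [|right; unfold Rdiv; ring].
  apply Rmult_le_compat_l; [lra|].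
  eapply Rle_trans; [apply mnorm_mpow|].
  apply Rmult_le_compat_l; auto. apply pow_incr.
  rewrite mnorm_scale, Rabs_Ropp. split; [apply Rmult_le_pos; auto; apply Rabs_pos|].
  apply Rmult_le_compat_r; auto.
Qed.

Lemma exp_tail_bound y r N : Rabs y <= r ->
  mnorm n n (msub (E y) (exp_partial N y))
  <= INR n * (exp (r * mnorm n n A) - exp_partial_R (r * mnorm n n A) N).
Proof.
  intros Hy. set (rho := r * mnorm n n A).
  assert (Hrho : 0 <= rho)
    by (apply Rmult_le_pos; [pose proof (Rabs_pos y); lra|apply mnorm_nonneg]).
  assert (Hdiff : forall M, (N <= M)%nat ->
            mnorm n n (msub (exp_partial M y) (exp_partial N y))
            <= INR n * (exp_partial_R rho M - exp_partial_R rho N)).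
  { intros M HM. replace M with (N + (M - N))%nat by lia.
    eapply Rle_trans; [apply mnorm_msum_tail|].
    unfold exp_partial_R at 1. rewrite Rsum_split.
    replace (_ + _ - exp_partial_R rho N)
      with (Rsum (fun k => rho ^ (N + k) / INR (fact (N + k))) (M - N)) by (unfold exp_partial_R; ring).
    rewrite <- Rsum_mul_l. apply Rsum_le; intros. apply exp_term_bound; auto. }
  apply Rle_plus_epsilon. intros e He.
  destruct (exp_partial_cv y e He) as [M0 HM0].
  specialize (HM0 (Nat.max M0 N) ltac:(lia)). unfold Rdist in HM0.
  rewrite Rminus_0_r, Rabs_right in HM0 by (apply Rle_ge, mnorm_nonneg).
  set (M := Nat.max M0 N) in *.
  rewrite (mnorm_meq n n _ (madd (msub (E y) (exp_partial M y))
                                 (msub (exp_partial M y) (exp_partial N y)))) by mring.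
  eapply Rle_trans; [apply mnorm_add|].
  pose proof (Hdiff M ltac:(lia)). pose proof (exp_partial_R_le rho M Hrho). pose proof (pos_INR n).
  assert (INR n * (exp_partial_R rho M - exp_partial_R rho N) <= INR n * (exp rho - exp_partial_R rho N))
    by (apply Rmult_le_compat_l; lra).
  lra.
Qed.

Lemma exp_partial_deriv N y i j : (i < n)%nat -> (j < n)%nat ->
  Cder (fun s => exp_partial (S N) s i j) y (mopp (mmul n A (exp_partial N y)) i j).
Proof.
  intros Hi Hj.
  set (c := fun k y => / INR (fact k) * (-1) ^ k * y ^ k).
  assert (Hterm : forall k y, exp_term k y i j = Cmul (RtoC (c k y)) (mpow n A k i j)).
  { intros k y'. unfold exp_term, c. rewrite mpow_scale, mscale_mscale. unfold mscale.
    replace (- y') with (-1 * y') by ring. rewrite Rpow_mult_distr. f_equal; f_equal; ring. }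
  eapply Cder_congr; [intros; reflexivity| |].
  2:{ apply (Cder_Csum (fun k s => exp_term k s i j)). intros k _.
      eapply Cder_congr; [intros s; symmetry; apply Hterm|reflexivity|].
      apply Cder_scale.
      apply (derivable_pt_lim_scal (fun s => s ^ k) (/ INR (fact k) * (-1) ^ k) y _
               (derivable_pt_lim_pow y k)). }
  rewrite Csum_shift. unfold exp_partial. rewrite mmul_msum_l. unfold mopp, msum.
  rewrite <- Csum_opp.
  replace (INR 0) with 0 by reflexivity. rewrite Rmult_0_l, Rmult_0_r.
  transitivity (Cadd C0 (Csum (fun k => Copp (mmul n A (exp_term k y) i j)) N)); [|cring].
  f_equal; [cring|]. apply Csum_ext; intros k _.
  unfold exp_term. rewrite mpow_scale, mscale_mscale, mmul_scale_r, (mpow_succ_l n A k i j Hi Hj).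
  unfold mscale. simpl pred. rewrite fact_simpl, mult_INR, S_INR.
  replace (- y) with (-1 * y) by ring. rewrite Rpow_mult_distr.
  assert (INR (fact k) <> 0) by apply INR_fact_neq_0. pose proof (pos_INR k).
  apply Cext; csimpl; field; lra.
Qed.

Lemma mexp_deriv t0 : mderiv_at n n E t0 (mopp (mmul n A (E t0))).
Proof.
  intros i j Hi Hj.
  set (r := Rabs t0 + 1). set (rho := r * mnorm n n A).
  pose proof (mnorm_nonneg n n A) as HA. pose proof (pos_INR n) as Hn.
  apply (Cder_uniform_limit (fun N s => exp_partial (S N) s i j)
           (fun N s => mopp (mmul n A (exp_partial N s)) i j)
           (fun s => E s i j) (fun s => mopp (mmul n A (E s)) i j) t0 (mkposreal 1 Rlt_0_1)).
  - intros e He. set (K := mnorm n n A * INR n + 1).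
    assert (HK : 0 < K) by (unfold K; nra).
    destruct (exp_partial_R_cv rho (e / K) ltac:(apply Rdiv_lt_0_compat; auto)) as [N HN].
    exists N. intros k y Hk Hy.
    assert (Hyr : Rabs y <= r).
    { unfold Boule in Hy; simpl in Hy. unfold r.
      pose proof (Rabs_triang (y - t0) t0). replace (y - t0 + t0) with y in * by ring. lra. }
    specialize (HN k Hk). unfold Rdist in HN.
    pose proof (exp_partial_R_le rho k ltac:(unfold rho, r; pose proof (Rabs_pos t0); nra)).
    rewrite Rabs_left1 in HN by lra.
    pose proof (exp_tail_bound y r k Hyr) as Htail. fold rho in Htail.
    replace (Cadd _ _) with (mopp (mmul n A (msub (E y) (exp_partial k y))) i j)
      by (rewrite mmul_sub_r; unfold mopp, msub, madd; cring).
    eapply Rle_lt_trans; [apply (mnorm_entry_le n n); auto|].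
    rewrite mnorm_opp. eapply Rle_lt_trans; [apply mnorm_mul|].
    apply Rle_lt_trans with (K * (exp rho - exp_partial_R rho k)).
    + apply Rle_trans with (mnorm n n A * (INR n * (exp rho - exp_partial_R rho k)));
        [apply Rmult_le_compat_l; auto|unfold K; nra].
    + replace e with (K * (e / K)) by (field; lra). apply Rmult_lt_compat_l; lra.
  - intros y _. destruct (HE y i j Hi Hj) as [Hre Him].
    split; intros e He; [destruct (Hre e He) as [N HN]|destruct (Him e He) as [N HN]];
      exists N; intros; apply HN; lia.
  - intros N y _. apply exp_partial_deriv; auto.
Qed.

Lemma mexp_comm B t : meq n n (mmul n A B) (mmul n B A) ->
  meq n n (mmul n B (E t)) (mmul n (E t) B).
Proof.
  intros H.
  assert (Hpartial : forall N, meq n n (mmul n B (exp_partial N t)) (mmul n (exp_partial N t) B)).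
  { intros N. unfold exp_partial. rewrite mmul_msum_l, mmul_msum_r. apply msum_meq. intros k.
    unfold exp_term. rewrite mmul_scale_l, mmul_scale_r. apply mscale_proper. symmetry.
    apply mpow_comm. rewrite mmul_scale_l, mmul_scale_r, H. reflexivity. }
  apply meq_of_mnorm_small. intros e He.
  set (K := 2 * mnorm n n B + 1).
  assert (HK : 0 < K) by (unfold K; pose proof (mnorm_nonneg n n B); lra).
  destruct (exp_partial_cv t (e / K) ltac:(apply Rdiv_lt_0_compat; auto)) as [N HN].
  specialize (HN N ltac:(lia)). unfold Rdist in HN.
  rewrite Rminus_0_r, Rabs_right in HN by (apply Rle_ge, mnorm_nonneg).
  set (D := msub (E t) (exp_partial N t)) in *.
  rewrite (mnorm_meq n n _ (msub (mmul n B D) (mmul n D B))).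
  2:{ unfold D. rewrite !mmul_sub_l, !mmul_sub_r, (Hpartial N). mring. }
  unfold msub. eapply Rle_trans; [apply mnorm_add|]. rewrite mnorm_opp.
  pose proof (mnorm_mul n n n B D). pose proof (mnorm_mul n n n D B).
  pose proof (mnorm_nonneg n n B). pose proof (mnorm_nonneg n n D).
  apply Rle_trans with (K * mnorm n n D); [unfold K; nra|].
  replace e with (K * (e / K)) by (field; lra). apply Rmult_le_compat_l; lra.
Qed.

End MatrixExp.

Lemma mderiv_resolvent_formula n m U V K (X W : R -> Mat) Xd t0 eps :
  0 < eps -> mderiv_at n n X t0 Xd ->
  (forall s, Rabs (s - t0) < eps ->
     is_inverse n (madd mI (mmul n (mmul n (X s) K) (mmul n (X s) K))) (W s)) ->
  let T := mmul n (X t0) K in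
  let Td := mmul n Xd K in
  let Wd := mopp (mmul n (W t0) (mmul n (madd (mmul n Td T) (mmul n T Td)) (W t0))) in
  mderiv_at m m (fun s => mopp (mmul n (mmul n (mmul n U (W s)) (X s)) V)) t0
    (mopp (mmul n (madd (mmul n (mmul n U Wd) (X t0)) (mmul n (mmul n U (W t0)) Xd)) V)).
Proof.
  intros Heps HX HW T Td Wd.
  assert (HT : mderiv_at n n (fun s => mmul n (X s) K) t0 Td) by (apply mderiv_mul_const_r; auto).
  assert (HWd : mderiv_at n n W t0 Wd).
  { apply (mderiv_inverse n _ W t0 eps _ Heps HW), mderiv_add_const_l, mderiv_mul; auto. }
  apply mderiv_opp, mderiv_mul_const_r, mderiv_mul; [apply mderiv_mul_const_l|]; auto.
Qed.

Section Xi.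
Variables (n : nat) (S Sinv : Mat) (E : R -> Mat).
Local Notation "A ** B" := (mmul n A B) (at level 40, left associativity).
Local Notation "A == B" := (meq n n A B) (at level 70).
Hypothesis HS1 : S ** Sinv == mI.
Hypothesis HS2 : Sinv ** S == mI.
Hypothesis HE : forall t, is_mexp n (mscale (- t) (msub S Sinv)) (E t).

Definition Xi (y : Z) (t : R) : Mat := mpowZ n S Sinv y ** E t.

Lemma S_comm_S_sub_Sinv : S ** msub S Sinv == msub S Sinv ** S.
Proof. rewrite mmul_sub_l, mmul_sub_r, HS1, HS2. reflexivity. Qed.

Lemma Sinv_comm_S_sub_Sinv : Sinv ** msub S Sinv == msub S Sinv ** Sinv.
Proof. apply comm_inverse with S; auto. apply S_comm_S_sub_Sinv. Qed.

Lemma Sinv_comm_Xi y t : Sinv ** Xi y t == Xi y t ** Sinv.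
Proof.
  assert (HP : Sinv ** mpowZ n S Sinv y == mpowZ n S Sinv y ** Sinv).
  { symmetry. apply mpowZ_comm; [rewrite HS1, HS2|]; reflexivity. }
  assert (HSE : S ** E t == E t ** S)
    by (apply (mexp_comm n (msub S Sinv) E HE); symmetry; apply S_comm_S_sub_Sinv).
  unfold Xi. rewrite <- mmul_assoc, HP, mmul_assoc, (comm_inverse n S Sinv (E t) HS1 HS2 HSE).
  rewrite mmul_assoc. reflexivity.
Qed.

Lemma Xi_succ y t : Xi (y + 1) t == S ** Xi y t.
Proof. unfold Xi. rewrite (mpowZ_succ n S Sinv y HS1), mmul_assoc. reflexivity. Qed.

Lemma Xi_sylvester y t K D :
  msub (Sinv ** K) (K ** S) == D -> msub (Sinv ** (Xi y t ** K)) ((Xi y t ** K) ** S) == Xi y t ** D.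
Proof.
  intros HK. rewrite <- HK, <- (mmul_assoc n n Sinv), Sinv_comm_Xi. mexpand. reflexivity.
Qed.

Lemma Xi_deriv y t : mderiv_at n n (Xi y) t (mopp (msub (S ** Xi y t) (Sinv ** Xi y t))).
Proof.
  eapply mderiv_congr; [intros; reflexivity| |].
  2:{ apply mderiv_mul_const_l, (mexp_deriv n (msub S Sinv) E HE). }
  assert (HP : mpowZ n S Sinv y ** msub S Sinv == msub S Sinv ** mpowZ n S Sinv y).
  { apply mpowZ_comm; [apply S_comm_S_sub_Sinv|apply Sinv_comm_S_sub_Sinv]. }
  unfold Xi. rewrite mmul_opp_r, <- mmul_assoc, HP, mmul_assoc, mmul_sub_l. reflexivity.
Qed.

End Xi.

Theorem mainTheorem16
  (n m : nat) (S Sinv U V K : Mat) (E : R -> Mat) (W : Z -> R -> Mat)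
  (x0 : Z) (t0 eps : R)
  (HS1 : meq n n (mmul n S Sinv) mI) (HS2 : meq n n (mmul n Sinv S) mI)
  (HK : meq n n (msub (mmul n Sinv K) (mmul n K S)) (mmul m V U))
  (HE : forall t, is_mexp n (mscale (- t) (msub S Sinv)) (E t))
  (Heps : 0 < eps)
  (HW : forall y s, (y = (x0 - 1)%Z \/ y = x0 \/ y = (x0 + 1)%Z) ->
     Rabs (s - t0) < eps ->
     let XK := mmul n (mmul n (mpowZ n S Sinv y) (E s)) K in
     let Mm := madd mI (mmul n XK XK) in
     meq n n (mmul n (W y s) Mm) mI /\ meq n n (mmul n Mm (W y s)) mI) :
  let calV := fun (y : Z) (s : R) =>
    mopp (mmul n (mmul n (mmul n U (W y s)) (mmul n (mpowZ n S Sinv y) (E s))) V) in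
  let Vc := calV x0 t0 in
  let Vp := calV (x0 + 1)%Z t0 in
  let Vm := calV (x0 - 1)%Z t0 in
  let IV2 := madd mI (mmul m Vc Vc) in
  mderiv_at m m (calV x0) t0
    (mopp (msub (mmul m Vp IV2) (mmul m IV2 Vm))).
Proof.
  intros calV Vc Vp Vm IV2.
  assert (Ht0 : Rabs (t0 - t0) < eps) by (rewrite Rminus_diag, Rabs_R0; auto).
  assert (HXm : meq n n (Xi n S Sinv E x0 t0) (mmul n S (Xi n S Sinv E (x0 - 1) t0))).
  { pose proof (Xi_succ n S Sinv E HS1 (x0 - 1) t0) as H.
    replace (x0 - 1 + 1)%Z with x0 in H by ring. exact H. }
  eapply mderiv_congr; [intros; reflexivity| |].
  2:{ eapply (mderiv_resolvent_formula n m U V K (Xi n S Sinv E x0) (W x0) _ t0 eps Heps);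
      [apply Xi_deriv; auto|intros s Hs; apply HW; auto]. }
  apply (sdmKdV_algebraic n m S Sinv); auto; try reflexivity.
  - apply (Xi_sylvester n S Sinv E HS1 HS2 HE x0), HK.
  - apply (Xi_sylvester n S Sinv E HS1 HS2 HE (x0 - 1)), HK.
  - apply (Xi_succ n S Sinv E HS1).
  - exact (HW x0 t0 ltac:(auto) Ht0).
  - exact (HW (x0 + 1)%Z t0 ltac:(auto) Ht0).
  - exact (HW (x0 - 1)%Z t0 ltac:(auto) Ht0).
Qed.
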